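(* Let \((Q, \preccurlyeq_Q)\) and \((L, \preccurlyeq_L)\) be posets with smallest elements \(q_0 \in Q\) and \(l_0 \in L\). Then the following conditions are equivalent for every mapping \(f \colon Q \to L\). (i) For every nonempty set \(X\), \(f \circ d\) is an \(L\)-ultrametric whenever \(d\colon X^2\to Q\) is a \(Q\)-ultrametric. (ii) \(f\) is isotone and, for every \(q \in Q\), \(f(q) = l_0\) holds if and only if \(q = q_0\).
   Context: For a poset \((P,\preccurlyeq_P)\) with smallest element \(p_0\) and a nonempty set \(X\), \(d\colon X^2\to P\) is a \(P\)-pseudoultrametric if \(d\) is symmetric, \(d(x,x)=p_0\) for all \(x\), and for every triple \(\langle x_1,x_2,x_3\rangle\) in \(X\) there is a permutation \((i_1,i_2,i_3)\) of \((1,2,3)\) with \(d(x_{i_1},x_{i_3})\preccurlyeq_P d(x_{i_1},x_{i_2})\) and \(d(x_{i_1},x_{i_2})=d(x_{i_2},x_{i_3})\); it is a \(P\)-ultrametric if moreover \(d(x,y)=p_0\) iff \(x=y\). A map \(f\colon Q\to L\) is isotone if \(q_1\preccurlyeq_Q q_2\) implies \(f(q_1)\preccurlyeq_L f(q_2)\). *)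

(* posets with a smallest element are [bPOrderType]s,
   the smallest element is [\bot]. *)
From HB Require Import structures.
From mathcomp Require Import all_boot all_order.
Set Implicit Arguments. Unset Strict Implicit. Unset Printing Implicit Defensive.
Import Order.Theory.
Local Open Scope order_scope.

Definition ultra_triple {disp : Order.disp_t} {P : bPOrderType disp} {X : Type}
  (d : X -> X -> P) (a b c : X) : Prop :=
  d a c <= d a b /\ d a b = d b c.

Definition pseudoultrametric {disp : Order.disp_t} {P : bPOrderType disp} {X : Type}
  (d : X -> X -> P) : Prop :=
  (forall x y, d x y = d y x) /\
  (forall x, d x x = \bot) /\
  (forall x1 x2 x3 : X,
     ultra_triple d x1 x2 x3 \/ ultra_triple d x1 x3 x2 \/
     ultra_triple d x2 x1 x3 \/ ultra_triple d x2 x3 x1 \/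
     ultra_triple d x3 x1 x2 \/ ultra_triple d x3 x2 x1).

Definition ultrametric {disp : Order.disp_t} {P : bPOrderType disp} {X : Type}
  (d : X -> X -> P) : Prop :=
  pseudoultrametric d /\ (forall x y, d x y = \bot <-> x = y).

Definition isotone {dQ dL : Order.disp_t} {Q : porderType dQ} {L : porderType dL}
  (f : Q -> L) : Prop :=
  forall q1 q2 : Q, q1 <= q2 -> f q1 <= f q2.

(** For (ii) => (i), applying an isotone map to the three sides of a triangle
    preserves the relations d(a,c) <= d(a,b) = d(b,c) that define an
    ultrametric, and the condition on [f^-1(l0)] preserves the zero set.
    For (i) => (ii), test [f] on the three-point ultrametric space with sides
    [q1 <= q2 = q2]: in any ultrametric two equal sides dominate the third, so
    [f q1 <= f q2]; the same space with [q1 = q2] shows that [f] does not send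
    a nonzero distance to [l0], and the one-point space gives [f q0 = l0]. *)
From HB Require Import structures.
From mathcomp Require Import all_boot all_order.
Set Implicit Arguments. Unset Strict Implicit. Unset Printing Implicit Defensive.
Import Order.Theory.
Local Open Scope order_scope.

Section Composition.
Variables (dP dL : Order.disp_t) (P : bPOrderType dP) (L : bPOrderType dL).
Variables (X : Type) (f : P -> L).
Hypothesis f_isotone : isotone f.

Lemma ultra_triple_comp (d : X -> X -> P) a b c :
  ultra_triple d a b c -> ultra_triple (fun x y => f (d x y)) a b c.
Proof. by case=> le_ac_ab eq_ab_bc; split; [exact: f_isotone | rewrite eq_ab_bc]. Qed.

Lemma pseudoultrametric_comp (d : X -> X -> P) :
  f \bot = \bot -> pseudoultrametric d ->
  pseudoultrametric (fun x y => f (d x y)).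
Proof.
move=> f0 [d_sym [d_refl d_tri]]; split; [|split].
- by move=> x y; rewrite d_sym.
- by move=> x; rewrite d_refl.
- move=> x1 x2 x3.
  by case: (d_tri x1 x2 x3) => [|[|[|[|[|]]]]] /ultra_triple_comp; tauto.
Qed.

Lemma ultrametric_comp (d : X -> X -> P) :
  (forall p, f p = \bot <-> p = \bot) -> ultrametric d ->
  ultrametric (fun x y => f (d x y)).
Proof.
move=> f_eq0 [d_pseudo d_eq0]; split.
  by apply: pseudoultrametric_comp => //; apply/f_eq0.
by move=> x y; split=> [/f_eq0/d_eq0 | /d_eq0/f_eq0].
Qed.

End Composition.

Lemma pseudoultrametric_isosceles_le (disp : Order.disp_t) (P : bPOrderType disp)
    (X : Type) (d : X -> X -> P) a b c :
  pseudoultrametric d -> d a c = d b c -> d a b <= d a c.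
Proof.
case=> d_sym [_ d_tri] eq_ac_bc.
case: (d_tri a b c) => [|[|[|[|[|]]]]] [];
  rewrite ?(d_sym b a) ?(d_sym c a) ?(d_sym c b) -?eq_ac_bc => le eq //;
  by rewrite ?eq.
Qed.

Lemma ultrametric_unit (disp : Order.disp_t) (P : bPOrderType disp) :
  ultrametric (fun _ _ : unit => (\bot : P)).
Proof.
split; last by case; case.
by split=> [//|]; split=> [//|] x1 x2 x3; left; split.
Qed.

Inductive triangle := Ta | Tb | Tc.

Definition triangle_dist (disp : Order.disp_t) (P : bPOrderType disp) (p1 p2 : P)
    (x y : triangle) : P :=
  match x, y with
  | Ta, Ta | Tb, Tb | Tc, Tc => \bot
  | Ta, Tb | Tb, Ta => p1
  | _, _ => p2
  end.

Lemma triangle_ultrametric (disp : Order.disp_t) (P : bPOrderType disp) (p1 p2 : P) :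
  p1 <= p2 -> p1 != \bot -> ultrametric (triangle_dist p1 p2).
Proof.
move=> le12 p1_neq0.
have p2_neq0 : p2 != \bot by rewrite -lt0x (lt_le_trans _ le12) ?lt0x.
split; last first.
  by case; case; split=> //= /eqP; rewrite ?(negPf p1_neq0) ?(negPf p2_neq0).
split; first by case; case.
split; first by case.
by case; case; case; rewrite /ultra_triple /= ?lexx ?le0x ?le12; intuition.
Qed.

Definition preserves_ultrametric (dQ dL : Order.disp_t) (Q : bPOrderType dQ)
    (L : bPOrderType dL) (f : Q -> L) : Prop :=
  forall X : Type, inhabited X ->
    forall d : X -> X -> Q, ultrametric d -> ultrametric (fun x y => f (d x y)).

Section PreservesUltrametric.
Variables (dQ dL : Order.disp_t) (Q : bPOrderType dQ) (L : bPOrderType dL).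
Variable f : Q -> L.
Hypothesis f_pres : preserves_ultrametric f.

Lemma preserves_ultrametric_bot : f \bot = \bot.
Proof.
by case: (f_pres (inhabits tt) (ultrametric_unit Q)) => [[_ [f_refl _]] _]; exact: f_refl.
Qed.

Lemma preserves_ultrametric_eq_bot q : f q = \bot <-> q = \bot.
Proof.
split=> [fq0 | ->]; last exact: preserves_ultrametric_bot.
have [// | q_neq0] := eqVneq q \bot.
case: (f_pres (inhabits Ta) (triangle_ultrametric (lexx q) q_neq0)) => _ fd_eq0.
by have := proj1 (fd_eq0 Ta Tb) fq0.
Qed.

Lemma preserves_ultrametric_isotone : isotone f.
Proof.
move=> q1 q2 le12.
have [-> | q1_neq0] := eqVneq q1 \bot; first by rewrite preserves_ultrametric_bot le0x.
case: (f_pres (inhabits Ta) (triangle_ultrametric le12 q1_neq0)) => fd_pseudo _.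
exact: (@pseudoultrametric_isosceles_le _ _ _ _ Ta Tb Tc fd_pseudo).
Qed.

End PreservesUltrametric.

Theorem corollary3p25 (dQ dL : Order.disp_t) (Q : bPOrderType dQ) (L : bPOrderType dL)
  (f : Q -> L) :
  (forall (X : Type), inhabited X ->
     forall d : X -> X -> Q, ultrametric d -> ultrametric (fun x y => f (d x y)))
  <->
  (isotone f /\ (forall q : Q, f q = \bot <-> q = \bot)).
Proof.
split=> [f_pres | [f_isotone f_eq0] X _ d].
- split; first exact: preserves_ultrametric_isotone.
  exact: preserves_ultrametric_eq_bot.
- exact: ultrametric_comp.
Qed.
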